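(* For $p\in(0,1)$ let $X_p^{(1)},X_p^{(2)}$ be independent geometric random variables, each with $P\{X=k\}=p(1-p)^k$, $k=0,1,2,\dots$, and let $X_p^S=X_p^{(1)}-X_p^{(2)}$. Then $$\inf_{p\in(0,1)}P\left\{|X^S_p-E[X^S_p]|\le\sqrt{\mathrm{Var}(X^S_p)}\right\}=\inf_{p\in(0,1)}P\left\{|X^S_p-E[X^S_p]|<\sqrt{\mathrm{Var}(X^S_p)}\right\}=\frac{\sqrt3}{3}.$$ *)

From Stdlib Require Import Reals.
From Coquelicot Require Import Coquelicot.
Open Scope R_scope.

Definition geom_pmf (p : R) (k : nat) : R := p * (1 - p) ^ k.

(* Probability space: nat x nat with the product of two geometric(p) laws,
   X1 = first coordinate, X2 = second coordinate (so X1, X2 are independent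
   geometric(p)); the symmetric variable is XS (i,j) = i - j. *)
Definition XS (i j : nat) : R := INR i - INR j.

Definition Eprod (p : R) (f : nat -> nat -> R) : R :=
  Series (fun i => Series (fun j => geom_pmf p i * geom_pmf p j * f i j)).

Definition Pprod (p : R) (A : nat -> nat -> Prop)
  (A_dec : forall i j, {A i j} + {~ A i j}) : R :=
  Eprod p (fun i j => if A_dec i j then 1 else 0).

Definition mean_XS (p : R) : R := Eprod p XS.
Definition var_XS (p : R) : R := Eprod p (fun i j => (XS i j - mean_XS p) ^ 2).

Definition prob_le (p : R) : R :=
  Pprod p (fun i j => Rabs (XS i j - mean_XS p) <= sqrt (var_XS p))
    (fun i j => Rle_dec (Rabs (XS i j - mean_XS p)) (sqrt (var_XS p))).

Definition prob_lt (p : R) : R :=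
  Pprod p (fun i j => Rabs (XS i j - mean_XS p) < sqrt (var_XS p))
    (fun i j => Rlt_dec (Rabs (XS i j - mean_XS p)) (sqrt (var_XS p))).

(* Under the product law, X^S = X1 - X2 has mean 0 and variance
   sigma^2 = 2(1-p)/p^2, and P{|X^S| < n} = 1 - 2(1-p)^n/(2-p) for n >= 1.
   As X^S is integer valued, both events of the theorem are of the form
   {|X^S| < n}, with n = floor sigma + 1 and n = ceil sigma respectively, so
   n >= sigma, i.e. 2(1-p) <= (n p)^2.  For n = 1 this means p >= sqrt 3 - 1,
   and the probability p/(2-p) is at least sqrt 3/3, with equality exactly at
   p = sqrt 3 - 1, where sigma = 1.  For n >= 2 the Bernoulli-type bound
   (1-p)^n (2 + (n-2)p)^2 <= 4(1-p)^2 keeps it above sqrt 3/3.  Hence the strict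
   version attains sqrt 3/3, and the non-strict one approaches it as p
   decreases to sqrt 3 - 1. *)

From Stdlib Require Import Reals Lra Lia Psatz.
From Coquelicot Require Import Coquelicot.
Open Scope R_scope.

Lemma is_series_eq (a b : nat -> R) (la lb : R) :
  (forall n, a n = b n) -> la = lb -> is_series a la -> is_series b lb.
Proof. intros Hab <-; exact (is_series_ext a b la Hab). Qed.

Lemma is_series_lin2 (a b : nat -> R) (la lb x y : R) :
  is_series a la -> is_series b lb ->
  is_series (fun n => x * a n + y * b n) (x * la + y * lb).
Proof.
  intros Ha Hb.
  exact (is_series_plus _ _ _ _ (is_series_scal_l x _ _ Ha) (is_series_scal_l y _ _ Hb)).
Qed.

Lemma is_series_lin3 (a b c : nat -> R) (la lb lc x y z : R) :
  is_series a la -> is_series b lb -> is_series c lc ->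
  is_series (fun n => x * a n + y * b n + z * c n) (x * la + y * lb + z * lc).
Proof.
  intros Ha Hb Hc.
  refine (is_series_eq _ _ _ _ _ _
            (is_series_lin2 _ _ _ _ 1 z (is_series_lin2 _ _ _ _ x y Ha Hb) Hc));
    intros; ring.
Qed.

Lemma Glb_Rbar_eq_approx (E : R -> Prop) (l : R) :
  (forall x, E x -> l <= x) -> (forall e, 0 < e -> exists x, E x /\ x < l + e) ->
  Glb_Rbar E = Finite l.
Proof.
  intros Hlb Happrox; apply is_glb_Rbar_unique; split.
  - intros x Ex; exact (Hlb x Ex).
  - intros [b| |] Hb; simpl; trivial.
    + apply Rnot_lt_le; intros Hlt.
      destruct (Happrox (b - l)) as [x [Ex Hx]]; [lra|].
      specialize (Hb x Ex); simpl in Hb; lra.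
    + destruct (Happrox 1 Rlt_0_1) as [x [Ex _]]; exact (Hb x Ex).
Qed.

Lemma sum_succ_INR (n : nat) :
  sum_f_R0 (fun k => INR k + 1) n = (INR n + 1) * (INR n + 2) / 2.
Proof.
  induction n as [|n IH]; [simpl; field|].
  rewrite tech5, IH, S_INR; field.
Qed.

Section GeometricSeries.

Variable r : R.
Hypothesis Hr : 0 <= r < 1.

Let r_abs_lt_1 : Rabs r < 1.
Proof. rewrite Rabs_pos_eq; lra. Qed.

Let r_pow_ge0 (n : nat) : 0 <= r ^ n.
Proof. apply pow_le; lra. Qed.

Lemma is_series_succ_mul_geom :
  is_series (fun n => (INR n + 1) * r ^ n) (/ (1 - r) ^ 2).
Proof.
  refine (is_series_eq _ _ _ _ _ _
            (is_series_mult_pos _ _ _ _ (is_series_geom r r_abs_lt_1)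
               (is_series_geom r r_abs_lt_1) r_pow_ge0 r_pow_ge0)).
  - intros n; rewrite (sum_eq _ (fun _ => r ^ n)).
    + rewrite sum_cte, S_INR; ring.
    + intros k Hk; rewrite <- pow_add; f_equal; lia.
  - field; lra.
Qed.

Lemma is_series_binom2_mul_geom :
  is_series (fun n => (INR n + 1) * (INR n + 2) / 2 * r ^ n) (/ (1 - r) ^ 3).
Proof.
  assert (Hpos : forall n, 0 <= (INR n + 1) * r ^ n).
  { intros n; apply Rmult_le_pos; [pose proof (pos_INR n); lra | apply r_pow_ge0]. }
  refine (is_series_eq _ _ _ _ _ _
            (is_series_mult_pos _ _ _ _ is_series_succ_mul_geom
               (is_series_geom r r_abs_lt_1) Hpos r_pow_ge0)).
  - intros n; rewrite (sum_eq _ (fun k => (INR k + 1) * r ^ n)).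
    + rewrite <- scal_sum, sum_succ_INR; ring.
    + intros k Hk; rewrite Rmult_assoc, <- pow_add; do 2 f_equal; lia.
  - field; lra.
Qed.

Lemma is_series_nat_mul_geom :
  is_series (fun n => INR n * r ^ n) (r / (1 - r) ^ 2).
Proof.
  refine (is_series_eq _ _ _ _ _ _
            (is_series_lin2 _ _ _ _ 1 (-1) is_series_succ_mul_geom
               (is_series_geom r r_abs_lt_1))).
  - intros n; ring.
  - field; lra.
Qed.

Lemma is_series_nat_sq_mul_geom :
  is_series (fun n => INR n ^ 2 * r ^ n) (r * (1 + r) / (1 - r) ^ 3).
Proof.
  refine (is_series_eq _ _ _ _ _ _
            (is_series_lin3 _ _ _ _ _ _ 2 (-3) 1 is_series_binom2_mul_geom
               is_series_succ_mul_geom (is_series_geom r r_abs_lt_1))).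
  - intros n; field.
  - field; lra.
Qed.

End GeometricSeries.

Lemma is_series_geom_shift (r : R) (K : nat) : Rabs r < 1 ->
  is_series (fun j => if (K <=? j)%nat then r ^ (j - K) else 0) (/ (1 - r)).
Proof.
  intros Hr; induction K as [|K IH].
  - refine (is_series_eq _ _ _ _ _ eq_refl (is_series_geom r Hr)).
    intros j; now rewrite Nat.sub_0_r.
  - apply is_series_decr_1.
    refine (is_series_eq _ _ _ _ _ _ IH); [reflexivity|].
    unfold plus, opp; simpl; ring.
Qed.

Definition prob_abs_XS_lt (p : R) (n : nat) : R := 1 - 2 * (1 - p) ^ n / (2 - p).

Lemma Rabs_XS (i j : nat) : Rabs (XS i j) = INR (i - j + (j - i)).
Proof.
  unfold XS; destruct (Nat.le_ge_cases i j) as [Hij|Hji].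
  - replace (i - j + (j - i))%nat with (j - i)%nat by lia.
    rewrite minus_INR by exact Hij; apply le_INR in Hij.
    rewrite Rabs_left1 by lra; ring.
  - replace (i - j + (j - i))%nat with (i - j)%nat by lia.
    rewrite minus_INR by exact Hji; apply le_INR in Hji.
    rewrite Rabs_right by lra; ring.
Qed.

Lemma INR_le_iff_lt (d n : nat) (s : R) :
  INR n - 1 <= s < INR n -> (INR d <= s <-> (d < n)%nat).
Proof.
  intros Hs; split; intros Hd.
  - apply INR_lt; lra.
  - apply le_INR in Hd; rewrite S_INR in Hd; lra.
Qed.

Lemma INR_lt_iff_lt (d n : nat) (s : R) :
  INR n - 1 < s <= INR n -> (INR d < s <-> (d < n)%nat).
Proof.
  intros Hs; split; intros Hd.
  - apply INR_lt; lra.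
  - apply le_INR in Hd; rewrite S_INR in Hd; lra.
Qed.

Lemma sq_two_mul_add_bound (q s : R) : 0 < q < 1 -> 0 <= s -> 2 * q <= s ^ 2 ->
  96 * q ^ 2 <= 5 * (1 + q) * (2 * q + s) ^ 2.
Proof.
  intros Hq Hs H.
  assert (Hs' : 7 / 5 * q <= s) by nra.
  assert (0 <= q * (s - 7 / 5 * q)) by (apply Rmult_le_pos; lra).
  assert (Hsq : 48 / 5 * q ^ 2 + 2 * q <= (2 * q + s) ^ 2) by nra.
  assert (Hpoly : 0 <= q * (48 * q ^ 2 - 38 * q + 10)).
  { apply Rmult_le_pos; [lra|]. pose proof (pow2_ge_0 (q - 19 / 48)). nra. }
  nra.
Qed.

Lemma pow_one_sub_mul_sq_le (p : R) (n : nat) : 0 <= p <= 1 -> (2 <= n)%nat ->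
  (1 - p) ^ n * (2 + (INR n - 2) * p) ^ 2 <= 4 * (1 - p) ^ 2.
Proof.
  intros Hp Hn; induction Hn as [|n Hn IH]; [simpl; lra|].
  rewrite S_INR, <- tech_pow_Rmult.
  replace (INR n + 1 - 2) with (INR n - 1) by ring.
  set (a := 2 + (INR n - 2) * p) in *; set (b := 2 + (INR n - 1) * p).
  assert (Hb : 2 <= b).
  { assert (2 <= INR n) by (replace 2 with (INR 2) by (simpl; lra); apply le_INR; exact Hn).
    unfold b; nra. }
  assert (Hstep : (1 - p) * b ^ 2 <= a ^ 2).
  { assert (E : a ^ 2 - (1 - p) * b ^ 2 = p * (b * (b - 2) + p)) by (unfold a, b; ring).
    assert (0 <= p * (b * (b - 2) + p)) by (apply Rmult_le_pos; nra).
    lra. }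
  apply Rle_trans with ((1 - p) ^ n * a ^ 2); [|exact IH].
  replace ((1 - p) * (1 - p) ^ n * b ^ 2) with ((1 - p) ^ n * ((1 - p) * b ^ 2)) by ring.
  apply Rmult_le_compat_l; [apply pow_le; lra | exact Hstep].
Qed.

Lemma sqrt3_spec : sqrt 3 * sqrt 3 = 3 /\ 1 < sqrt 3 < 7 / 4.
Proof.
  assert (H3 : sqrt 3 * sqrt 3 = 3) by (apply sqrt_sqrt; lra).
  assert (0 < sqrt 3) by (apply sqrt_lt_R0; lra).
  split; [exact H3 | split; nra].
Qed.

Lemma prob_abs_XS_lt_1 (p : R) : p < 2 -> prob_abs_XS_lt p 1 = p / (2 - p).
Proof. intros Hp; unfold prob_abs_XS_lt; field; lra. Qed.

Lemma sqrt3_div3_le_div_two_sub (p : R) : sqrt 3 - 1 <= p < 2 -> sqrt 3 / 3 <= p / (2 - p).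
Proof.
  intros Hp; destruct sqrt3_spec as [H3 Hs].
  apply (Rmult_le_reg_r (3 * (2 - p))); [lra|].
  replace (p / (2 - p) * (3 * (2 - p))) with (3 * p) by (field; lra).
  replace (sqrt 3 / 3 * (3 * (2 - p))) with (sqrt 3 * (2 - p)) by field.
  assert (0 <= (p - (sqrt 3 - 1)) * (3 + sqrt 3)) by (apply Rmult_le_pos; lra).
  nra.
Qed.

Lemma six_pow_one_sub_le (p : R) (n : nat) : 0 < p < 1 -> (2 <= n)%nat ->
  2 * (1 - p) <= (INR n * p) ^ 2 -> 6 * (1 - p) ^ n <= (3 - sqrt 3) * (2 - p).
Proof.
  intros Hp Hn Hvar; destruct sqrt3_spec as [_ Hs].
  set (q := 1 - p) in *; set (s := INR n * p) in *.
  assert (Hs0 : 0 < s) by (unfold s; apply Rmult_lt_0_compat; [apply lt_0_INR; lia | lra]).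
  assert (Hpow : q ^ n * (2 * q + s) ^ 2 <= 4 * q ^ 2).
  { replace (2 * q + s) with (2 + (INR n - 2) * p) by (unfold q, s; ring).
    apply pow_one_sub_mul_sq_le; [lra | exact Hn]. }
  assert (Hnum := sq_two_mul_add_bound q s ltac:(unfold q; lra) (Rlt_le _ _ Hs0) Hvar).
  assert (Hpos : 0 < (2 * q + s) ^ 2) by (apply pow_lt; unfold q; lra).
  apply (Rmult_le_reg_r ((2 * q + s) ^ 2) _ _ Hpos).
  replace (2 - p) with (1 + q) by (unfold q; ring).
  (* 6 q^n (2q+s)^2 <= 24 q^2 <= 5/4 (1+q) (2q+s)^2, and 5/4 < 3 - sqrt 3 *)
  nra.
Qed.

Lemma sqrt3_div3_le_prob_abs_XS_lt (p : R) (n : nat) : 0 < p < 1 -> (1 <= n)%nat ->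
  2 * (1 - p) <= (INR n * p) ^ 2 -> sqrt 3 / 3 <= prob_abs_XS_lt p n.
Proof.
  intros Hp Hn Hvar; destruct sqrt3_spec as [H3 Hs].
  destruct (Nat.eq_dec n 1) as [->|Hn1].
  - rewrite prob_abs_XS_lt_1 by lra; apply sqrt3_div3_le_div_two_sub; split; [|lra].
    simpl in Hvar; nra.
  - assert (H6 := six_pow_one_sub_le p n Hp ltac:(lia) Hvar).
    unfold prob_abs_XS_lt.
    apply (Rmult_le_reg_r (3 * (2 - p))); [lra|].
    replace ((1 - 2 * (1 - p) ^ n / (2 - p)) * (3 * (2 - p)))
      with (3 * (2 - p) - 6 * (1 - p) ^ n) by (field; lra).
    replace (sqrt 3 / 3 * (3 * (2 - p))) with (sqrt 3 * (2 - p)) by field.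
    lra.
Qed.

Section GeometricLaw.

Variable p : R.
Hypothesis Hp : 0 < p < 1.

Let q_range : 0 <= 1 - p < 1.
Proof. lra. Qed.

Let m1 := (1 - p) / p.
Let m2 := (1 - p) * (2 - p) / p ^ 2.

Lemma is_series_geom_pmf_quadratic (a b c : R) :
  is_series (fun k => geom_pmf p k * (a + b * INR k + c * INR k ^ 2))
    (a + b * m1 + c * m2).
Proof.
  refine (is_series_eq _ _ _ _ _ _
            (is_series_lin3 _ _ _ _ _ _ (p * a) (p * b) (p * c)
               (is_series_geom (1 - p) ltac:(rewrite Rabs_pos_eq; lra))
               (is_series_nat_mul_geom _ q_range) (is_series_nat_sq_mul_geom _ q_range))).
  - intros k; unfold geom_pmf; ring.
  - unfold m1, m2; field; lra.
Qed.

Lemma Eprod_eq (f : nat -> nat -> R) (b : nat -> R) (l : R) :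
  (forall i, is_series (fun j => geom_pmf p i * geom_pmf p j * f i j) (b i)) ->
  is_series b l -> Eprod p f = l.
Proof.
  intros Hrow Hcol; unfold Eprod.
  rewrite (Series_ext _ b) by (intros i; apply is_series_unique, Hrow).
  now apply is_series_unique.
Qed.

Lemma Eprod_quadratic (f : nat -> nat -> R) (a0 a1 a2 b1 b2 c : R) :
  (forall i j, f i j = a0 + a1 * INR i + a2 * INR i ^ 2
                       + b1 * INR j + b2 * INR j ^ 2 + c * INR i * INR j) ->
  Eprod p f = a0 + (a1 + b1) * m1 + (a2 + b2) * m2 + c * m1 ^ 2.
Proof.
  intros Hf.
  apply (Eprod_eq _ (fun i => geom_pmf p i *
           ((a0 + b1 * m1 + b2 * m2) + (a1 + c * m1) * INR i + a2 * INR i ^ 2))).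
  - intros i.
    refine (is_series_eq _ _ _ _ _ _ (is_series_scal_r (geom_pmf p i) _ _
              (is_series_geom_pmf_quadratic (a0 + a1 * INR i + a2 * INR i ^ 2)
                 (b1 + c * INR i) b2))).
    + intros j; rewrite Hf; ring.
    + ring.
  - refine (is_series_eq _ _ _ _ _ _ (is_series_geom_pmf_quadratic _ _ _));
      [reflexivity | ring].
Qed.

Lemma mean_XS_eq : mean_XS p = 0.
Proof.
  unfold mean_XS; rewrite (Eprod_quadratic _ 0 1 0 (-1) 0 0); [ring|].
  intros i j; unfold XS; ring.
Qed.

Lemma var_XS_eq : var_XS p = 2 * (1 - p) / p ^ 2.
Proof.
  unfold var_XS; rewrite (Eprod_quadratic _ 0 0 1 0 1 (-2)); [unfold m1, m2; field; lra|].
  intros i j; rewrite mean_XS_eq; unfold XS; ring.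
Qed.

Lemma is_series_geom_pmf_tail (K : nat) :
  is_series (fun j => if (K <=? j)%nat then geom_pmf p j else 0) ((1 - p) ^ K).
Proof.
  refine (is_series_eq _ _ _ _ _ _ (is_series_scal_r (p * (1 - p) ^ K) _ _
            (is_series_geom_shift (1 - p) K ltac:(rewrite Rabs_pos_eq; lra)))).
  - intros j; unfold geom_pmf; destruct (Nat.leb_spec K j); [|ring].
    rewrite Rmult_comm, Rmult_assoc, <- pow_add; do 2 f_equal; lia.
  - field; lra.
Qed.

Lemma is_series_geom_pmf : is_series (geom_pmf p) 1.
Proof. exact (is_series_geom_pmf_tail 0). Qed.

Lemma Pprod_abs_XS_lt (n : nat) (A : nat -> nat -> Prop)
    (A_dec : forall i j, {A i j} + {~ A i j}) :
  (1 <= n)%nat -> (forall i j, A i j <-> (i < j + n /\ j < i + n)%nat) ->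
  Pprod p A A_dec = prob_abs_XS_lt p n.
Proof.
  intros Hn HA; unfold prob_abs_XS_lt; set (q := 1 - p).
  assert (Hq2 : Rabs (q ^ 2) < 1) by (unfold q; rewrite Rabs_pos_eq; nra).
  apply (Eprod_eq _ (fun i => p * (q ^ (i + (i + 1 - n)) - q ^ (i + (i + n))))).
  (* For fixed i the event is i + 1 - n <= j < i + n, the truncated subtraction
     giving the lower bound 0 when i < n. *)
  - intros i.
    refine (is_series_eq _ _ _ _ _ _ (is_series_lin2 _ _ _ _ (geom_pmf p i) (- geom_pmf p i)
              (is_series_geom_pmf_tail (i + 1 - n)) (is_series_geom_pmf_tail (i + n)))).
    + intros j; destruct (A_dec i j) as [a|a]; rewrite HA in a;
        destruct (Nat.leb_spec (i + 1 - n) j); destruct (Nat.leb_spec (i + n) j);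
        first [lia | ring].
    + unfold geom_pmf; fold q; rewrite !pow_add; ring.
  - refine (is_series_eq _ _ _ _ _ _ (is_series_lin2 _ _ _ _ 1 1
              (is_series_lin2 _ _ _ _ 1 (-1) is_series_geom_pmf (is_series_geom_pmf_tail n))
              (is_series_lin2 _ _ _ _ (p * q ^ (n + 1)) (- p * q ^ n)
                 (is_series_geom_shift _ n Hq2) (is_series_geom _ Hq2)))).
    + intros i; unfold geom_pmf; fold q.
      destruct (Nat.leb_spec n i);
        rewrite <- !pow_mult, !Rmult_assoc, <- !pow_add;
        replace (i + (i + n))%nat with (n + 2 * i)%nat by lia.
      * replace (i + (i + 1 - n))%nat with (n + 1 + 2 * (i - n))%nat by lia; ring.
      * replace (i + (i + 1 - n))%nat with i by lia; ring.
    + replace (n + 1)%nat with (S n) by lia; simpl pow; unfold q.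
      field; split; nra.
Qed.

Lemma var_XS_pos : 0 < var_XS p.
Proof. rewrite var_XS_eq; apply Rdiv_lt_0_compat; nra. Qed.

Lemma sqrt_var_XS_pos : 0 < sqrt (var_XS p).
Proof. exact (sqrt_lt_R0 _ var_XS_pos). Qed.

Lemma var_bound_of_sqrt_var_XS_le (x : R) :
  sqrt (var_XS p) <= x -> 2 * (1 - p) <= (x * p) ^ 2.
Proof.
  intros Hx.
  assert (Hv : var_XS p <= x ^ 2).
  { rewrite <- (pow2_sqrt _ (Rlt_le _ _ var_XS_pos)).
    apply pow_incr; split; [apply sqrt_pos | exact Hx]. }
  rewrite var_XS_eq in Hv; rewrite Rpow_mult_distr.
  apply (Rmult_le_compat_r (p ^ 2)) in Hv; [|nra].
  replace (2 * (1 - p) / p ^ 2 * p ^ 2) with (2 * (1 - p)) in Hv by (field; lra).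
  exact Hv.
Qed.

Lemma prob_le_eq (n : nat) :
  INR n - 1 <= sqrt (var_XS p) < INR n -> prob_le p = prob_abs_XS_lt p n.
Proof.
  intros Hn; unfold prob_le; apply Pprod_abs_XS_lt.
  - apply INR_lt; simpl; pose proof (sqrt_pos (var_XS p)); lra.
  - intros i j; rewrite mean_XS_eq, Rminus_0_r, Rabs_XS, (INR_le_iff_lt _ _ _ Hn); lia.
Qed.

Lemma prob_lt_eq (n : nat) :
  INR n - 1 < sqrt (var_XS p) <= INR n -> prob_lt p = prob_abs_XS_lt p n.
Proof.
  intros Hn; unfold prob_lt; apply Pprod_abs_XS_lt.
  - apply INR_lt; simpl; pose proof sqrt_var_XS_pos; lra.
  - intros i j; rewrite mean_XS_eq, Rminus_0_r, Rabs_XS, (INR_lt_iff_lt _ _ _ Hn); lia.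
Qed.

Lemma sqrt3_div3_le_prob_le : sqrt 3 / 3 <= prob_le p.
Proof.
  destruct (nfloor_ex _ (sqrt_pos (var_XS p))) as [m Hm].
  rewrite (prob_le_eq (S m)) by (rewrite S_INR; lra).
  apply sqrt3_div3_le_prob_abs_XS_lt; [exact Hp | lia |].
  apply var_bound_of_sqrt_var_XS_le; rewrite S_INR; lra.
Qed.

Lemma sqrt3_div3_le_prob_lt : sqrt 3 / 3 <= prob_lt p.
Proof.
  destruct (nfloor1_ex _ sqrt_var_XS_pos) as [m Hm].
  rewrite (prob_lt_eq (S m)) by (rewrite S_INR; lra).
  apply sqrt3_div3_le_prob_abs_XS_lt; [exact Hp | lia |].
  apply var_bound_of_sqrt_var_XS_le; rewrite S_INR; lra.
Qed.

End GeometricLaw.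

Lemma sqrt_var_XS_lt_1 (p : R) : sqrt 3 - 1 < p < 1 -> sqrt (var_XS p) < 1.
Proof.
  intros Hp; destruct sqrt3_spec as [H3 Hs].
  apply Rlt_le_trans with (sqrt 1); [apply sqrt_lt_1_alt | rewrite sqrt_1; lra].
  split; [apply Rlt_le, var_XS_pos; lra|].
  rewrite var_XS_eq by lra; apply (Rmult_lt_reg_r (p ^ 2)); [nra|].
  replace (2 * (1 - p) / p ^ 2 * p ^ 2) with (2 * (1 - p)) by (field; lra).
  nra.
Qed.

Lemma sqrt_var_XS_sqrt3_sub1 : sqrt (var_XS (sqrt 3 - 1)) = 1.
Proof.
  destruct sqrt3_spec as [H3 Hs].
  rewrite var_XS_eq by lra; transitivity (sqrt 1); [f_equal | exact sqrt_1].
  assert (E : (sqrt 3 - 1) ^ 2 = 2 * (1 - (sqrt 3 - 1))) by (simpl; nra).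
  rewrite E; field; lra.
Qed.

Lemma prob_lt_sqrt3_sub1 : prob_lt (sqrt 3 - 1) = sqrt 3 / 3.
Proof.
  destruct sqrt3_spec as [H3 Hs].
  assert (Hp0 : 0 < sqrt 3 - 1 < 1) by lra.
  rewrite (prob_lt_eq _ Hp0 1) by (rewrite sqrt_var_XS_sqrt3_sub1; simpl; lra).
  rewrite prob_abs_XS_lt_1 by lra.
  apply (Rmult_eq_reg_r (3 * (3 - sqrt 3))); [|lra].
  replace ((sqrt 3 - 1) / (2 - (sqrt 3 - 1)) * (3 * (3 - sqrt 3)))
    with (3 * (sqrt 3 - 1)) by (field; lra).
  replace (sqrt 3 / 3 * (3 * (3 - sqrt 3))) with (3 * sqrt 3 - sqrt 3 * sqrt 3) by field.
  lra.
Qed.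

Lemma prob_le_near_sqrt3_div3 (e : R) : 0 < e ->
  exists p, 0 < p < 1 /\ prob_le p < sqrt 3 / 3 + e.
Proof.
  intros He; destruct sqrt3_spec as [H3 Hs].
  set (p := Rmin (sqrt 3 - 1 + e / 4) (sqrt 3 / 2)).
  assert (Hp_e : p <= sqrt 3 - 1 + e / 4) by apply Rmin_l.
  assert (Hp_1 : p <= sqrt 3 / 2) by apply Rmin_r.
  assert (Hp0 : sqrt 3 - 1 < p) by (apply Rmin_glb_lt; lra).
  assert (Hp : 0 < p < 1) by lra.
  exists p; split; [exact Hp|].
  rewrite (prob_le_eq p Hp 1), prob_abs_XS_lt_1
    by (pose proof (sqrt_pos (var_XS p)); pose proof (sqrt_var_XS_lt_1 p); simpl; lra).
  apply (Rmult_lt_reg_r (2 - p)); [lra|].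
  replace (p / (2 - p) * (2 - p)) with p by (field; lra).
  nra.
Qed.

Theorem proposition3p2 :
  Glb_Rbar (fun x => exists p, 0 < p < 1 /\ x = prob_le p) = Finite (sqrt 3 / 3) /\
  Glb_Rbar (fun x => exists p, 0 < p < 1 /\ x = prob_lt p) = Finite (sqrt 3 / 3).
Proof.
  destruct sqrt3_spec as [_ Hs].
  split; apply Glb_Rbar_eq_approx.
  - intros x [p [Hp ->]]; exact (sqrt3_div3_le_prob_le p Hp).
  - intros e He; destruct (prob_le_near_sqrt3_div3 e He) as [p [Hp Hlt]].
    exists (prob_le p); split; [exists p; split; trivial | exact Hlt].
  - intros x [p [Hp ->]]; exact (sqrt3_div3_le_prob_lt p Hp).
  - intros e He; exists (prob_lt (sqrt 3 - 1)); split.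
    + exists (sqrt 3 - 1); split; [lra | reflexivity].
    + rewrite prob_lt_sqrt3_sub1; lra.
Qed.
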